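(* Let $q$ be a power of the prime $p$ and $n$ a positive integer. Let $f, h, k\in \mathbb{F}_q[x]$ with $k(\mathbb{F}_q)\subseteq\mathbb{F}_q^*$, and let $P(x)=f(\mathrm{Tr}_{q^n/q}(x))+k(\mathrm{Tr}_{q^n/q}(x))\cdot L_h(x)$. Then $P$ is a permutation polynomial of $\mathbb{F}_{q^n}$ if and only if $\gcd\left(h(x), \frac{x^n-1}{x-1}\right)=1$ and $Q(x)=n\cdot f(x)+h(1)k(x)\cdot x$ induces a permutation of $\mathbb{F}_q$. More specifically, $P$ is a permutation polynomial of $\mathbb{F}_{q^n}$ if and only if one of the following holds: (i) $p\mid n$, $\gcd(h(x), x^n-1)=1$, and $k(x)\cdot x$ is a permutation polynomial of $\mathbb{F}_q$; (ii) $p\nmid n$, $\gcd(h(x), x^n-1)=x-1$, and $f$ is a permutation polynomial of $\mathbb{F}_q$; (iii) $p\nmid n$, $\gcd(h(x), x^n-1)=1$, and $n f(x)+h(1)\cdot k(x)\cdot x$ is a permutation polynomial of $\mathbb{F}_q$.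
   Context: For $u(x)=\sum_{i=0}^m a_i x^i\in\mathbb{F}_q[x]$, its linearized $q$-associate is $L_u(x)=\sum_{i=0}^m a_i x^{q^i}$. $\mathrm{Tr}_{q^n/q}(x)=x+x^q+\cdots+x^{q^{n-1}}$. A permutation polynomial of a finite field is a polynomial inducing a bijection of it. *)

From HB Require Import structures.
From mathcomp Require Import all_boot all_order all_algebra all_field.
Set Implicit Arguments. Unset Strict Implicit. Unset Printing Implicit Defensive.
Import GRing.Theory.
Local Open Scope ring_scope.

(* F plays the role of F_q, L the role of F_{q^n}; iota : F -> L embeds F_q in
   F_{q^n}. Polynomials over F are evaluated on elements of L via iota. *)

Definition trq {L : finFieldType} (q n : nat) (x : L) : L :=
  \sum_(i < n) x ^+ (q ^ i).

Definition linq {F L : finFieldType} (iota : {rmorphism F -> L}) (q : nat)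
  (u : {poly F}) (x : L) : L :=
  \sum_(i < size u) iota u`_i * x ^+ (q ^ i).

Definition is_pp {F : finFieldType} (g : {poly F}) : Prop :=
  bijective (fun x : F => g.[x]).

(** The map [u |-> L_u] is a ring morphism from [F_q[x]] to the [F_q]-linear
   endomorphisms of [F_{q^n}]: [L_{uv} = L_u o L_v], since [x |-> x^q] is additive
   and fixes [F_q]. Moreover [L_{x^n - 1} = 0] and [Tr = L_g] with
   [g = 1 + x + ... + x^(n-1)]. As [Tr] commutes with every [L_u], takes values
   in [F_q] and [L_u] acts on [F_q] as multiplication by [u(1)], we get
   [Tr (P x) = Q (Tr x)] for [Q = n f + h(1) k x].
   If [P] permutes [F_{q^n}] then [Q] permutes [F_q] because [Tr] is onto [F_q].
   If [d = gcd(h, g)] is not constant, [L_e] with [e = (x^n - 1)/d] is not zero,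
   as it is a polynomial map of degree [q^(deg e) < q^n]; any nonzero [z] in its
   image is killed by [L_d], hence by [L_h] and [Tr], and [P z = P 0].
   Conversely, if [Q] is injective, [P x = P y] forces [Tr x = Tr y] and then
   [L_h (x - y) = 0 = L_g (x - y)], so [x = y] by a Bezout relation between [h]
   and [g]. The three cases come from [x^n - 1 = (x - 1) g] with [g(1) = n]:
   when [p | n] we get [Q = h(1) k x], and when [p] does not divide [n] the
   factors [x - 1] and [g] are coprime. *)

From HB Require Import structures.
From mathcomp Require Import all_boot all_order all_algebra all_field zify.
Set Implicit Arguments.
Unset Strict Implicit.
Unset Printing Implicit Defensive.
Import GRing.Theory.
Local Open Scope ring_scope.

Definition geom_poly (R : nzRingType) (n : nat) : {poly R} := \sum_(i < n) 'X^i.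

Section GeomPoly.
Variable F : fieldType.
Local Notation geom_poly := (@geom_poly F).

Lemma geom_polyE n : geom_poly n = \poly_(i < n) 1.
Proof. by rewrite poly_def; apply: eq_bigr => i _; rewrite scale1r. Qed.

Lemma size_geom_poly n : size (geom_poly n) = n.
Proof. by rewrite geom_polyE size_poly_eq ?oner_eq0. Qed.

Lemma geom_poly_eq0 n : (geom_poly n == 0) = (n == 0%N).
Proof. by rewrite -size_poly_eq0 size_geom_poly. Qed.

Lemma geom_poly1 n : (geom_poly n).[1] = n%:R.
Proof.
rewrite horner_sum (eq_bigr (fun _ => 1)) ?sumr_const ?card_ord // => i _.
by rewrite hornerXn expr1n.
Qed.

Lemma mul_Xsub1_geom_poly n : ('X - 1) * geom_poly n = 'X^n - 1.
Proof. by rewrite subrX1. Qed.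

Lemma divp_Xn_sub1 n : ('X^n - 1) %/ ('X - 1) = geom_poly n.
Proof. by rewrite -mul_Xsub1_geom_poly mulKp // -polyC1 polyXsubC_eq0. Qed.

Lemma coprimep_Xn_sub1 (h : {poly F}) n :
  coprimep h ('X^n - 1) = ~~ root h 1 && coprimep h (geom_poly n).
Proof. by rewrite -mul_Xsub1_geom_poly coprimepMr -polyC1 coprimep_XsubC. Qed.

Lemma eqp_gcdp_Xn_sub1 (h : {poly F}) n : n%:R != 0 :> F -> root h 1 ->
  (gcdp h ('X^n - 1) %= 'X - 1) = coprimep h (geom_poly n).
Proof.
move=> n_neq0 h1; have Xsub1_neq0 : 'X - 1 != 0 :> {poly F}.
  by rewrite -polyC1 polyXsubC_eq0.
have /divpK <- : 'X - 1 %| h by rewrite -polyC1 dvdp_XsubCl.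
rewrite -mul_Xsub1_geom_poly [_ * geom_poly n]mulrC (eqp_ltrans (gcdp_mul2r _ _ _)).
rewrite -[X in _ %= X]mul1r (eqp_mul2r _ _ Xsub1_neq0) gcdp_eqp1.
rewrite coprimepMl [coprimep (_ - _) _]coprimep_sym -polyC1 coprimep_XsubC rootE.
by rewrite geom_poly1 n_neq0 andbT.
Qed.

End GeomPoly.

Section PermutationPolynomial.
Variable F : finFieldType.

Lemma is_ppZ c (r : {poly F}) : c != 0 -> is_pp (c *: r) <-> is_pp r.
Proof.
move=> c_neq0; rewrite /is_pp.
split=> /bij_inj r_inj; apply: injF_bij => x y /= eq_xy; apply: r_inj => /=.
  by rewrite !hornerZ eq_xy.
by apply: (mulfI c_neq0); rewrite -!hornerZ.
Qed.

Lemma not_is_pp0 : ~ is_pp (0 : {poly F}).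
Proof.
move=> /bij_inj inj0; have := inj0 0 1; rewrite !horner0 => /(_ erefl) /esym /eqP.
by rewrite oner_eq0.
Qed.

End PermutationPolynomial.

Section LinearizedAssociate.
Variables (F L : finFieldType) (iota : {rmorphism F -> L}).
Local Notation q := #|F|.
Local Notation lin := (linq iota q).

Lemma pnat_pchar_card : [pchar L].-nat q.
Proof.
have [p p_pr pcharFp] := finPcharP F.
rewrite (card_pprimeChar pcharFp) (eq_pnat _ (pcharf_eq (rmorph_pchar iota pcharFp))).
by rewrite pnatX pnat_id.
Qed.

Lemma expr_qpowD i (x y : L) : (x + y) ^+ (q ^ i) = x ^+ (q ^ i) + y ^+ (q ^ i).
Proof. by apply: exprDn_pchar; rewrite pnatX pnat_pchar_card. Qed.

Lemma rmorph_expr_qpow i c : iota c ^+ (q ^ i) = iota c.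
Proof.
elim: i => [|i IHi]; first by rewrite expr1.
by rewrite expnSr exprM IHi -rmorphXn expf_card.
Qed.

Lemma frobenius_fixed (y : L) : y ^+ q = y -> exists a, y = iota a.
Proof.
move=> yq; have /(congr1 (map_poly iota)) := finField_genPoly F.
rewrite rmorphB /= map_polyXn map_polyX -(prod_map_poly iota _ xpredT) => genL.
have : root ('X^q - 'X) y by rewrite rootE !hornerE yq subrr.
by rewrite genL root_prod_XsubC => /mapP[a _ ->]; exists a.
Qed.

Lemma linq_is_nmod_morphism (u : {poly F}) : nmod_morphism (lin u).
Proof.
split=> [|x y]; rewrite /linq.
  by apply: big1 => i _; rewrite expr0n expn_eq0 gtn_eqF ?mulr0 // (ltnW (finNzRing_gt1 F)).
by rewrite -big_split; apply: eq_bigr => i _; rewrite expr_qpowD mulrDr.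
Qed.

HB.instance Definition _ (u : {poly F}) :=
  GRing.isNmodMorphism.Build L L (lin u) (linq_is_nmod_morphism u).

Lemma linq_iotaM (u : {poly F}) c (x : L) : lin u (iota c * x) = iota c * lin u x.
Proof.
by rewrite /linq mulr_sumr; apply: eq_bigr => i _; rewrite exprMn rmorph_expr_qpow mulrCA.
Qed.

Lemma linq_iota (u : {poly F}) a : lin u (iota a) = iota (u.[1] * a).
Proof.
rewrite /linq horner_coef rmorphM rmorph_sum mulr_suml.
by apply: eq_bigr => i _; rewrite rmorph_expr_qpow rmorphM rmorphXn rmorph1 expr1n mulr1.
Qed.

Lemma linq_widen (u : {poly F}) N (x : L) : (size u <= N)%N ->
  lin u x = \sum_(i < N) iota u`_i * x ^+ (q ^ i).
Proof.
move=> le_uN; rewrite /linq (big_ord_widen N (fun i => iota u`_i * x ^+ (q ^ i)) le_uN).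
rewrite big_mkcond; apply: eq_bigr => i _; case: ifP => // /negbT.
by rewrite -leqNgt => /(nth_default 0) ->; rewrite rmorph0 mul0r.
Qed.

Lemma linq0 (x : L) : lin 0 x = 0.
Proof. by rewrite /linq size_poly0 big_ord0. Qed.

Lemma linq1 (x : L) : lin 1 x = x.
Proof. by rewrite /linq size_poly1 big_ord1 coefC /= rmorph1 mul1r expr1. Qed.

Lemma linqD (u v : {poly F}) (x : L) : lin (u + v) x = lin u x + lin v x.
Proof.
pose N := maxn (size u) (size v).
rewrite !(@linq_widen _ N) ?leq_maxl ?leq_maxr ?size_polyD // -big_split.
by apply: eq_bigr => i _; rewrite coefD rmorphD mulrDl.
Qed.

Lemma linqCM c (v : {poly F}) (x : L) : lin (c%:P * v) x = iota c * lin v x.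
Proof.
rewrite !(@linq_widen _ (size v)) // ?mul_polyC ?size_scale_leq // mulr_sumr.
by apply: eq_bigr => i _; rewrite coefZ rmorphM mulrA.
Qed.

Lemma linqN (u : {poly F}) (x : L) : lin (- u) x = - lin u x.
Proof. by rewrite -mulN1r -polyCN linqCM rmorphN1 mulN1r. Qed.

Lemma linqB (u v : {poly F}) (x : L) : lin (u - v) x = lin u x - lin v x.
Proof. by rewrite linqD linqN. Qed.

Lemma linq_sum I (r : seq I) (P : pred I) (G : I -> {poly F}) (x : L) :
  lin (\sum_(i <- r | P i) G i) x = \sum_(i <- r | P i) lin (G i) x.
Proof. by apply: (big_morph (fun u => lin u x)) => [u v|]; rewrite ?linqD ?linq0. Qed.

Lemma linqXM_frobenius (v : {poly F}) (x : L) : lin ('X * v) x = lin v (x ^+ q).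
Proof.
have le_Xv : (size ('X * v)%R <= (size v).+1)%N.
  by rewrite (leq_trans (size_polyMleq _ _)) // size_polyX.
rewrite (linq_widen x le_Xv) (@linq_widen v (size v)) // big_ord_recl.
rewrite coefXM rmorph0 mul0r add0r; apply: eq_bigr => i _.
by rewrite coefXM /= -exprM expnS.
Qed.

Lemma linqXM (v : {poly F}) (x : L) : lin ('X * v) x = lin v x ^+ q.
Proof.
have frobD : {morph (fun y : L => y ^+ q) : y z / y + z}.
  by move=> y z; have := expr_qpowD 1 y z; rewrite expn1.
have frob0 : (0 : L) ^+ q = 0 by rewrite expr0n gtn_eqF // (ltnW (finNzRing_gt1 F)).
rewrite linqXM_frobenius /linq (big_morph _ frobD frob0); apply: eq_bigr => i _.
by rewrite exprMn -rmorphXn expf_card -!exprM mulnC.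
Qed.

Lemma linqM (u v : {poly F}) (x : L) : lin (u * v) x = lin u (lin v x).
Proof.
elim/poly_ind: u v => [|u c IHu] v; first by rewrite mul0r !linq0.
rewrite mulrDl -mulrA !linqD IHu linqCM linqXM (mulrC u) linqXM_frobenius.
by rewrite -[c%:P]mulr1 linqCM linq1.
Qed.

Lemma linqXn i (x : L) : lin 'X^i x = x ^+ (q ^ i).
Proof.
elim: i => [|i IHi]; first by rewrite expr0 linq1 expr1.
by rewrite exprS linqXM IHi -exprM expnSr.
Qed.

Lemma linq_neq0 (e : {poly F}) : e != 0 -> (q ^ (size e).-1 < #|L|)%N ->
  exists y, lin e y != 0.
Proof.
move=> e_neq0 lt_deg_L; have [y lin_y_neq0 | lin_e0] := pickP (fun y => lin e y != 0).
  by exists y.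
have q_gt1 := finNzRing_gt1 F; pose d := (size e).-1.
have lt_d_e : (d < size e)%N by rewrite prednK // size_poly_gt0.
pose E : {poly L} := \sum_(i < size e) iota e`_i *: 'X^(q ^ i).
have coefE j : E`_j = \sum_(i < size e | (q ^ i == j)%N) iota e`_i by rewrite coef_sumMXn.
have E_neq0 : E != 0.
  apply: contraNneq e_neq0 => /(congr1 (fun r : {poly L} => r`_(q ^ d)%N)).
  rewrite coefE coef0 (big_pred1 (Ordinal lt_d_e)) => [/eqP|i]; last first.
    by rewrite /= eqn_exp2l.
  by rewrite fmorph_eq0 -lead_coefE lead_coef_eq0.
have size_E : (size E <= (q ^ d).+1)%N.
  apply/leq_sizeP => j lt_j; rewrite coefE big_pred0 // => i.
  apply: ltn_eqF; apply: leq_ltn_trans lt_j.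
  by rewrite leq_pexp2l ?(ltnW q_gt1) // -ltnS prednK ?size_poly_gt0.
have Eroots : all (root E) (enum L).
  apply/allP => y _; rewrite rootE horner_sum.
  under eq_bigr do rewrite hornerZ hornerXn.
  exact: negbFE (lin_e0 y).
have := max_poly_roots E_neq0 Eroots (enum_uniq _).
by rewrite -cardE => /leq_trans/(_ size_E); rewrite ltnS leqNgt lt_deg_L.
Qed.

End LinearizedAssociate.

Section Trace.
Variables (F L : finFieldType) (iota : {rmorphism F -> L}) (n : nat).
Hypothesis cardL : #|L| = (#|F| ^ n)%N.
Local Notation q := #|F|.
Local Notation lin := (linq iota q).
Local Notation Tr := (trq q n).

Lemma linq_Xn_sub1 (x : L) : lin ('X^n - 1) x = 0.
Proof. by rewrite linqB linqXn linq1 -cardL expf_card subrr. Qed.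

Lemma trq_linq (x : L) : Tr x = lin (geom_poly F n) x.
Proof. by rewrite linq_sum; apply: eq_bigr => i _; rewrite linqXn. Qed.

Lemma trq_frobenius (x : L) : Tr x ^+ q = Tr x.
Proof.
have XgE : 'X * geom_poly F n = geom_poly F n + ('X^n - 1).
  by rewrite -mul_Xsub1_geom_poly mulrBl mul1r addrC subrK.
by rewrite trq_linq -linqXM XgE linqD linq_Xn_sub1 addr0.
Qed.

Lemma trq_iota (x : L) : exists a, Tr x = iota a.
Proof. exact/frobenius_fixed/trq_frobenius. Qed.

Hypothesis n_gt0 : (0 < n)%N.

Lemma trq_surj a : exists x, Tr x = iota a.
Proof.
have [y] : exists y, lin (geom_poly F n) y != 0.
  apply: linq_neq0; first by rewrite geom_poly_eq0 -lt0n.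
  by rewrite size_geom_poly cardL ltn_exp2l ?finNzRing_gt1 // ltn_predL.
have [c tr_y] := trq_iota y; rewrite -trq_linq tr_y fmorph_eq0 => c_neq0.
exists (iota (a / c) * y).
by rewrite trq_linq linq_iotaM -trq_linq tr_y -rmorphM divfK.
Qed.

End Trace.

Section PermutationCriterion.
Variables (F L : finFieldType) (iota : {rmorphism F -> L}) (n : nat).
Variables f h k : {poly F}.
Hypotheses (n_gt0 : (0 < n)%N) (cardL : #|L| = (#|F| ^ n)%N).
Hypothesis k_neq0 : forall x, k.[x] != 0.
Local Notation q := #|F|.
Local Notation lin := (linq iota q).
Local Notation Tr := (trq q n).
Local Notation g := (geom_poly F n).

Let P := fun x : L =>
  (map_poly iota f).[Tr x] + (map_poly iota k).[Tr x] * lin h x.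
Let Q := f *+ n + h.[1] *: (k * 'X).

Lemma P_trq x a : Tr x = iota a -> P x = iota f.[a] + iota k.[a] * lin h x.
Proof. by move=> tr_x; rewrite /P tr_x !horner_map. Qed.

Lemma trq_P x a : Tr x = iota a -> Tr (P x) = iota Q.[a].
Proof.
move=> tr_x; rewrite (P_trq tr_x) (trq_linq iota) raddfD /= linq_iota linq_iotaM.
rewrite -linqM (mulrC g) linqM -(trq_linq iota) tr_x linq_iota geom_poly1 -!rmorphM -rmorphD.
by rewrite /Q hornerD hornerMn hornerZ hornerM hornerX mulr_natl mulrCA.
Qed.

Lemma inj_P_coprimep : injective P -> coprimep h g.
Proof.
move=> P_inj; apply/idPn => not_coprime; pose d := gcdp h g.
have size_Xn_sub1 : size ('X^n - 1 : {poly F}) = n.+1 by rewrite -polyC1 size_XnsubC.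
have Xn_sub1_neq0 : 'X^n - 1 != 0 :> {poly F} by rewrite -size_poly_eq0 size_Xn_sub1.
have d_dvd : d %| 'X^n - 1 by rewrite -mul_Xsub1_geom_poly dvdp_mull // dvdp_gcdr.
have size_d : (1 < size d)%N.
  have : d != 0 by rewrite /d gcdp_eq0 geom_poly_eq0 gtn_eqF ?andbF.
  by move: not_coprime; rewrite coprimep_def -size_poly_eq0; case: (size d) => [|[]].
pose e := ('X^n - 1) %/ d.
have ed : e * d = 'X^n - 1 by rewrite divpK.
have e_neq0 : e != 0 by apply: contra_neq Xn_sub1_neq0; rewrite -ed => ->; rewrite mul0r.
have size_e : (size e <= n)%N.
  by rewrite size_divp -?size_poly_eq0 ?size_Xn_sub1 //; lia.
have [y z_neq0] : exists y, lin e y != 0.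
  by apply: linq_neq0; rewrite // cardL ltn_exp2l ?finNzRing_gt1 // -ltnS prednK ?size_poly_gt0.
set z := lin e y in z_neq0 *.
have lin_d_z : lin d z = 0 by rewrite -linqM mulrC ed linq_Xn_sub1.
have lin_h_z : lin h z = 0 by rewrite -(divpK (dvdp_gcdl h g)) linqM lin_d_z raddf0.
have tr_z : Tr z = 0.
  by rewrite (trq_linq iota) -(divpK (dvdp_gcdr h g)) linqM lin_d_z raddf0.
have : P z = P 0 by rewrite /P tr_z lin_h_z (trq_linq iota) !raddf0.
by move/P_inj => z0; rewrite z0 eqxx in z_neq0.
Qed.

Lemma bij_P_is_pp : bijective P -> is_pp Q.
Proof.
case=> Pinv _ PinvK.
have /fin_all_exists[Qinv QinvK] : forall b, exists a, Q.[a] = b.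
  move=> b; have [w tr_w] := trq_surj iota cardL n_gt0 b.
  have [a tr_a] := trq_iota iota cardL (Pinv w).
  by exists a; apply: (fmorph_inj iota); rewrite -(trq_P tr_a) PinvK.
by exists Qinv; [exact: canF_sym | exact: QinvK].
Qed.

Lemma coprimep_is_pp_inj_P : coprimep h g -> is_pp Q -> injective P.
Proof.
move=> h_coprime [Qinv QK _] x y eq_Pxy.
have [a tr_x] := trq_iota iota cardL x; have [b tr_y] := trq_iota iota cardL y.
have eq_ab : a = b.
  by apply: (can_inj QK); apply: (fmorph_inj iota); rewrite -(trq_P tr_x) -(trq_P tr_y) eq_Pxy.
move: eq_Pxy; rewrite (P_trq tr_x) (P_trq tr_y) -eq_ab => /addrI/mulfI.
rewrite fmorph_eq0 k_neq0 => /(_ isT) eq_lin_h.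
apply/eqP; rewrite -subr_eq0.
have lin_h : lin h (x - y) = 0 by rewrite raddfB /= eq_lin_h subrr.
have lin_g : lin g (x - y) = 0 by rewrite raddfB /= -!(trq_linq iota) tr_x tr_y eq_ab subrr.
have [[u v] /= /eqpf_eq[c c_neq0]] := Bezout_coprimepP _ _ h_coprime.
move/(congr1 (fun r => lin r (x - y))).
rewrite linqD !linqM lin_h lin_g !raddf0 addr0 alg_polyC -[c%:P]mulr1 linqCM linq1.
by move/esym/eqP; rewrite mulf_eq0 fmorph_eq0 (negbTE c_neq0).
Qed.

Lemma bijective_P : bijective P <-> coprimep h g /\ is_pp Q.
Proof.
split=> [P_bij | [h_coprime Q_pp]]; last exact/injF_bij/coprimep_is_pp_inj_P.
by split; [exact/inj_P_coprimep/bij_inj/P_bij | exact: bij_P_is_pp P_bij].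
Qed.

End PermutationCriterion.

Lemma coprimep_is_pp_cases (F : finFieldType) p n (f h k : {poly F}) :
  p \in [pchar F] ->
  (coprimep h (geom_poly F n) /\ is_pp (f *+ n + h.[1] *: (k * 'X))) <->
     [\/ [/\ (p %| n)%N, coprimep h ('X ^+ n - 1) & is_pp (k * 'X)],
         [/\ ~~ (p %| n)%N, gcdp h ('X ^+ n - 1) %= 'X - 1 & is_pp f]
       | [/\ ~~ (p %| n)%N, coprimep h ('X ^+ n - 1) &
             is_pp (f *+ n + h.[1] *: (k * 'X))]].
Proof.
move=> pcharFp; rewrite coprimep_Xn_sub1 (dvdn_pcharf pcharFp) rootE.
have [n0 | n_neq0] := eqVneq (n%:R : F) 0.
  rewrite -scaler_nat n0 scale0r add0r.
  split=> [[h_coprime Q_pp] | [[_ /andP[h1_neq0 h_coprime] k_pp] | [] | []]] //.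
    have h1_neq0 : h.[1] != 0.
      by apply: contraPneq Q_pp => ->; rewrite scale0r; exact: not_is_pp0.
    by apply: Or31; rewrite h1_neq0; split=> //; exact/(is_ppZ _ h1_neq0).
  by split=> //; exact/(is_ppZ _ h1_neq0).
rewrite -scaler_nat.
have [h1 | h1_neq0] := eqVneq h.[1] 0.
  rewrite h1 scale0r addr0 eqp_gcdp_Xn_sub1 ?rootE ?h1 //.
  split=> [[h_coprime /(is_ppZ _ n_neq0) f_pp] | [[] | [_ h_coprime f_pp] | []]] //.
    by apply: Or32.
  by split=> //; exact/(is_ppZ _ n_neq0).
split=> [[h_coprime Q_pp] | [[] | [_ gcd_eqp _] | [_ /andP[_ h_coprime] Q_pp]]] //.
  by apply: Or33.
have := dvdp_gcdl h ('X^n - 1); rewrite (eqp_dvdl _ gcd_eqp) -polyC1 dvdp_XsubCl rootE.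
by rewrite (negbTE h1_neq0).
Qed.

Theorem corollary3p3 (F L : finFieldType) (iota : {rmorphism F -> L})
  (p n : nat) (f h k : {poly F}) :
  p \in [pchar F] -> (0 < n)%N -> #|L| = (#|F| ^ n)%N ->
  (forall x : F, k.[x] != 0) ->
  let q := #|F| in
  let P := fun x : L =>
    (map_poly iota f).[trq q n x] + (map_poly iota k).[trq q n x] * linq iota q h x in
  (bijective P <->
     coprimep h (('X ^+ n - 1) %/ ('X - 1)) /\
     is_pp (f *+ n + h.[1] *: (k * 'X)))
  /\
  (bijective P <->
     [\/ [/\ (p %| n)%N, coprimep h ('X ^+ n - 1) & is_pp (k * 'X)],
         [/\ ~~ (p %| n)%N, gcdp h ('X ^+ n - 1) %= 'X - 1 & is_pp f]
       | [/\ ~~ (p %| n)%N, coprimep h ('X ^+ n - 1) &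
             is_pp (f *+ n + h.[1] *: (k * 'X))]]).
Proof.
move=> pcharFp n_gt0 cardL k_neq0 q P.
rewrite divp_Xn_sub1 (bijective_P iota f h n_gt0 cardL k_neq0).
by split=> //; exact: coprimep_is_pp_cases.
Qed.
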